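(* Fix a TxnSP instance. The set of schedules obtained by applying the derivation rule to the $n!$ permutations of $J$ contains at least one optimal schedule, i.e. a schedule of minimum makespan among all schedules.
   Context: TxnSP instance: jobs $J=\{1,\dots,n\}$, identical machines $1,\dots,m$, lengths $L_\alpha>0$, symmetric binary conflict matrix $C$ with zero diagonal ($C_{\alpha\beta}=1$ iff $\alpha\neq\beta$ conflict). Insertion process: Start from some state, where each machine $\mu$ has a processing time $P_\mu$ (initially $0$ when empty). An instruction $(\alpha,\mu)$ appends a not-yet-placed job $\alpha$ at the end of machine $\mu$. It assigns $\alpha$ the start time $st(\alpha)$, defined as the least $t\ge P_\mu$ such that $[t,t+L_\alpha)$ is disjoint from $[st(\beta),ct(\beta))$ for every already placed job $\beta$ with $C_{\alpha\beta}=1$. It then sets the completion time $ct(\alpha)=st(\alpha)+L_\alpha$ and updates $P_\mu:=ct(\alpha)$. A schedule is the result (machine assignment, order, start/completion times) of applying, from the empty state, a list of instructions whose jobs are exactly $J$. Its makespan is $\max_\mu P_\mu$. Derivation rule: given a permutation $(\alpha_1,\dots,\alpha_n)$ of $J$, insert the jobs in this order, each into a machine with currently smallest processing time $P_\mu$, breaking ties by smallest machine index. *)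

From HB Require Import structures.
From mathcomp Require Import all_boot all_order all_algebra.
Set Implicit Arguments. Unset Strict Implicit. Unset Printing Implicit Defensive.
Import Order.TTheory GRing.Theory Num.Theory.
Local Open Scope ring_scope.

Section TxnSP.
Variables (R : realFieldType) (n m : nat).
Variable L : 'I_n -> R.                 (* job lengths *)
Variable C : 'I_n -> 'I_n -> bool.      (* conflict matrix *)

(* An instruction (alpha, mu): append job alpha at the end of machine mu. *)
Definition instr := ('I_n * 'I_m)%type.

Definition feasible (placed : seq 'I_n) (st : 'I_n -> R) (a : 'I_n) (t : R) :=
  forall b, b \in placed -> C a b ->
    ~ (exists x, t <= x < t + L a /\ st b <= x < st b + L b).

Definition is_start (placed : seq 'I_n) (P : 'I_m -> R) (st : 'I_n -> R)
    (a : 'I_n) (mu : 'I_m) (t : R) :=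
  [/\ P mu <= t, feasible placed st a t &
      forall t', P mu <= t' -> feasible placed st a t' -> t <= t'].

(* run ok I P st : applying the instruction list I from the empty state,
   each instruction satisfying the side condition [ok] w.r.t. the current
   processing times, yields processing times P and start times st
   (st is only meaningful on placed jobs). *)
Inductive run (ok : ('I_m -> R) -> instr -> Prop) :
    seq instr -> ('I_m -> R) -> ('I_n -> R) -> Prop :=
| run_nil : run ok [::] (fun _ => 0) (fun _ => 0)
| run_rcons I P st a mu t :
    run ok I P st ->
    a \notin map fst I ->
    ok P (a, mu) ->
    is_start (map fst I) P st a mu t ->
    run ok (rcons I (a, mu))
        (fun nu => if nu == mu then t + L a else P nu)
        (fun b => if b == a then t else st b).

Definition any_instr (P : 'I_m -> R) (i : instr) : Prop := True.

Definition derive_instr (P : 'I_m -> R) (i : instr) : Prop :=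
  forall nu, (P i.2 < P nu) || ((P i.2 == P nu) && (i.2 <= nu)%N).

Definition is_schedule (I : seq instr) (P : 'I_m -> R) (st : 'I_n -> R) :=
  perm_eq (map fst I) (enum 'I_n) /\ run any_instr I P st.

Definition derived_schedule (p : seq 'I_n) (I : seq instr)
    (P : 'I_m -> R) (st : 'I_n -> R) :=
  map fst I = p /\ run derive_instr I P st.

(* Makespan = max_mu P mu (processing times are nonnegative). *)
Definition makespan (P : 'I_m -> R) : R := \big[Num.max/0]_(mu < m) P mu.

End TxnSP.

From HB Require Import structures.
From mathcomp Require Import all_boot all_order all_algebra.
Set Implicit Arguments. Unset Strict Implicit. Unset Printing Implicit Defensive.
Import Order.TTheory GRing.Theory Num.Theory.
Local Open Scope ring_scope.

(* Let S be any schedule and list the jobs by nondecreasing start time in S.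
   Along this list, the derivation rule starts every job no later than S does:
   when job a starts in S, some machine of the derived schedule is already
   free (otherwise its m machines would be busy with jobs that, like a, are
   running at that moment in S, i.e. m + 1 jobs running at once on m
   machines), and the start time of a in S is free of conflicts with the jobs
   already derived.  Hence every machine load of the derived schedule is
   bounded by the makespan of S, and a permutation whose derived schedule has
   least makespan is optimal. *)

Lemma intervals_disjointP (R : realDomainType) (s1 l1 s2 l2 : R) :
  0 < l1 -> 0 < l2 ->
  reflect (~ exists x, s1 <= x < s1 + l1 /\ s2 <= x < s2 + l2)
          ((s1 + l1 <= s2) || (s2 + l2 <= s1)).
Proof.
move=> l1_gt0 l2_gt0; apply: (iffP idP).
  case/orP=> le [x [/andP [h1 h2] /andP [h3 h4]]].
    by have := lt_le_trans h2 (le_trans le h3); rewrite ltxx.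
  by have := lt_le_trans h4 (le_trans le h1); rewrite ltxx.
move=> no_common; apply/negPn/negP; rewrite negb_or -!ltNge => /andP [lt12 lt21].
apply: no_common; case: (lerP s1 s2) => le12.
  by exists s2; rewrite le12 lt12 lexx ltrDl l2_gt0.
by exists s1; rewrite lexx ltrDl l1_gt0 (ltW le12) lt21.
Qed.

Lemma uniq_fst_eq (S T : eqType) (s : seq (S * T)) x y y' :
  uniq (map fst s) -> (x, y) \in s -> (x, y') \in s -> y = y'.
Proof.
elim: s => [//|[x0 y0] s IH] /= /andP [x0_notin /IH {}IH].
have x0_new z : (x0, z) \notin s by apply: contra x0_notin => /(map_f fst).
rewrite !inE => /predU1P [[-> ->]|xy] /predU1P [|xy'].
- by case.
- by rewrite (negPf (x0_new _)) in xy'.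
- by case=> ex _; rewrite ex (negPf (x0_new _)) in xy.
- exact: IH.
Qed.

Lemma mem_fst_neq (S T : eqType) (s : seq (S * T)) b nu a :
  (b, nu) \in s -> a \notin map fst s -> b != a.
Proof. by move=> bs; apply: contraNneq => <-; exact: (map_f fst bs). Qed.

Lemma perm_fst_enum_graph (S : finType) (T : eqType) (s : seq (S * T)) :
  perm_eq (map fst s) (enum S) -> exists f : S -> T, forall x, (x, f x) \in s.
Proof.
move=> perm_s; suff graph x : exists y, (x, y) \in s by exact: fin_all_exists graph.
have: x \in map fst s by rewrite (perm_mem perm_s) mem_enum.
by case/mapP => -[x' y] xy /= ->; exists y.
Qed.

Lemma exists_min_witness (d : Order.disp_t) (V : orderType d) (T : eqType)
    (X : Type) (D : T -> X -> Prop) (v : X -> V) (s : seq T) :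
  s != [::] -> {in s, forall q, exists x, D q x} ->
  exists q0 x0, [/\ q0 \in s, D q0 x0 &
    {in s, forall q, exists2 x, D q x & (v x0 <= v x)%O}].
Proof.
elim: s => [//|a s IH] _ witness.
have [xa Da] := witness a (mem_head _ _).
have [->|s_ne] := eqVneq s [::].
  by exists a, xa; split=> [||q]; rewrite ?mem_head // inE => /eqP ->; exists xa.
have [|q0 [x0 [q0s D0 min0]]] := IH s_ne.
  by move=> q qs; apply: witness; rewrite inE qs orbT.
case: (leP (v xa) (v x0)) => [a_le|a_gt].
  exists a, xa; split=> [||q]; rewrite ?mem_head // inE => /predU1P [->|qs].
    by exists xa.
  by have [x Dx le] := min0 q qs; exists x => //; apply: le_trans le.
exists q0, x0; split=> [||q]; rewrite ?inE ?q0s ?orbT // => /predU1P [->|].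
  by exists xa => //; apply: ltW.
exact: min0.
Qed.

Section Insertion.
Variables (R : realFieldType) (n m : nat) (L : 'I_n -> R) (C : 'I_n -> 'I_n -> bool).
Hypothesis L_gt0 : forall a, 0 < L a.
Hypothesis C_sym : forall a b, C a b = C b a.

Definition running (st : 'I_n -> R) b x := st b <= x < st b + L b.

Definition disjoint_jobs (st : 'I_n -> R) b c :=
  (st b + L b <= st c) || (st c + L c <= st b).

Definition fits (placed : seq 'I_n) (st : 'I_n -> R) a t :=
  all (fun b => C a b ==> (t + L a <= st b) || (st b + L b <= t)) placed.

Lemma feasibleP placed st a t :
  reflect (feasible L C placed st a t) (fits placed st a t).
Proof.
apply: (iffP allP) => [fit b bp Cab | feas b bp].
  by apply/(intervals_disjointP _ _ (L_gt0 a) (L_gt0 b)); exact: implyP (fit b bp) Cab.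
apply/implyP => /(feas b bp).
by move/(intervals_disjointP _ _ (L_gt0 a) (L_gt0 b)).
Qed.

Lemma running_not_disjoint st b c x :
  running st b x -> running st c x -> ~~ disjoint_jobs st b c.
Proof.
move=> rb rc; apply/negP => /(intervals_disjointP _ _ (L_gt0 b) (L_gt0 c)).
by apply; exists x.
Qed.

Section Run.
Variable ok : ('I_m -> R) -> instr n m -> Prop.

Lemma run_fst_uniq I P st : run L C ok I P st -> uniq (map fst I).
Proof. by elim=> // I0 P0 st0 a mu t _ IH a_new _ _; rewrite map_rcons rcons_uniq a_new. Qed.

Lemma run_load_ge0 I P st : run L C ok I P st -> forall mu, 0 <= P mu.
Proof.
elim=> // I0 P0 st0 a mu t _ IH _ _ [Pt _ _] nu.
case: (nu == mu) => //; apply: addr_ge0; last exact: ltW.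
exact: le_trans (IH mu) Pt.
Qed.

Lemma run_within I P st : run L C ok I P st ->
  forall b mu, (b, mu) \in I -> 0 <= st b /\ st b + L b <= P mu.
Proof.
elim=> // I0 P0 st0 a mu t rI IH a_new _ [Pt _ _] b nu.
rewrite mem_rcons inE => /predU1P [[-> ->]|bI].
  by rewrite !eqxx; split=> //; exact: le_trans (run_load_ge0 rI mu) Pt.
rewrite (negPf (mem_fst_neq bI a_new)); have [st_ge0 st_le] := IH _ _ bI.
split=> //; case: eqP => [nu_mu|//]; rewrite nu_mu in st_le.
by apply: le_trans st_le (le_trans Pt _); rewrite lerDl ltW.
Qed.

Lemma run_disjoint I P st : run L C ok I P st ->
  forall b mu c nu, (b, mu) \in I -> (c, nu) \in I -> b != c ->
    C b c || (mu == nu) -> disjoint_jobs st b c.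
Proof.
elim=> // I0 P0 st0 a mu t rI IH a_new _ [Pt /feasibleP t_fits _].
set st1 := fun b => if b == a then t else st0 b.
have new_disj c nu : (c, nu) \in I0 -> C a c || (mu == nu) -> disjoint_jobs st1 a c.
  move=> cI; rewrite /disjoint_jobs /st1 eqxx (negPf (mem_fst_neq cI a_new)).
  case/orP=> [Cac|/eqP mu_nu].
    exact: implyP (allP t_fits c (map_f fst cI)) Cac.
  by subst nu; rewrite (le_trans (run_within rI cI).2 Pt) orbT.
move=> b mu1 c nu; rewrite !mem_rcons !inE.
case/predU1P=> [[-> ->]|bI] /predU1P [[-> ->]|cI].
- by rewrite eqxx.
- by move=> _; exact: new_disj.
- by move=> _; rewrite C_sym eq_sym => /(new_disj _ _ bI); rewrite /disjoint_jobs orbC.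
- move=> bc /(IH _ _ _ _ bI cI bc).
  by rewrite /disjoint_jobs /st1 (negPf (mem_fst_neq bI a_new)) (negPf (mem_fst_neq cI a_new)).
Qed.

Lemma run_load I P st : run L C ok I P st ->
  forall nu, P nu = 0 \/ exists2 b, (b, nu) \in I & P nu = st b + L b.
Proof.
elim=> [|I0 P0 st0 a mu t _ IH a_new _ _] nu; first by left.
have [->|_] := eqVneq nu mu.
  by right; exists a; rewrite ?mem_rcons ?mem_head ?eqxx.
case: (IH nu) => [->|[b bI ->]]; first by left.
right; exists b; first by rewrite mem_rcons inE bI orbT.
by rewrite (negPf (mem_fst_neq bI a_new)).
Qed.

End Run.

(* The least feasible start time is either P mu or the completion time of a
   placed job, so it is a minimum over finitely many candidates. *)
Lemma exists_start placed (P : 'I_m -> R) st a mu :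
  exists t, is_start L C placed P st a mu t.
Proof.
pose cand (i : option 'I_n) := if i is Some b then st b + L b else P mu.
pose valid (i : option 'I_n) := if i is Some b then b \in placed else true.
pose good i := [&& valid i, P mu <= cand i & fits placed st a (cand i)].
have good_below t' : P mu <= t' -> fits placed st a t' -> exists2 i, good i & cand i <= t'.
  move=> Pt' fit'.
  case: (@arg_maxP _ _ _ None (fun i => valid i && (cand i <= t')) cand)
    => [//|j /andP [vj jt'] jmax].
  exists j => //; apply/and3P; split=> //; first exact: jmax None Pt'.
  apply/allP=> b bp; apply/implyP=> Cab.
  case/orP: (implyP (allP fit' b bp) Cab) => [le|le].
    by rewrite (le_trans _ le) // lerD2r.
  by apply/orP; right; apply: (jmax (Some b)); apply/andP.
have [||i0 gi0 _] := good_below (cand [arg max_(i > None | valid i) cand i]%O).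
- by case: arg_maxP => // j _ jmax; exact: (jmax None).
- case: arg_maxP => // j _ jmax; apply/allP=> b bp.
  by apply/implyP=> _; apply/orP; right; exact: (jmax (Some b)).
case: (@arg_minP _ _ _ i0 good cand) => // i /and3P [_ Pi fit] imin.
exists (cand i); split=> // [|t' Pt' /feasibleP fit']; first exact/feasibleP.
have [j gj jt'] := good_below t' Pt' fit'.
exact: le_trans (imin j gj) jt'.
Qed.

Lemma exists_derive_machine (P : 'I_m -> R) (a : 'I_n) : (0 < m)%N ->
  exists mu, derive_instr P (a, mu).
Proof.
move=> m_gt0; pose mu0 := [arg min_(i < Ordinal m_gt0) P i]%O.
have mu0_min nu : P mu0 <= P nu.
  by rewrite /mu0; case: arg_minP => // i _ imin; exact: imin.
exists [arg min_(i < mu0 | P i == P mu0) val i] => nu /=.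
case: arg_minnP => // mu /eqP Pmu mu_min.
rewrite Pmu lt_neqAle mu0_min andbT.
by case: eqVneq => //= Pnu; rewrite mu_min // Pnu.
Qed.

Lemma derive_instr_le (P : 'I_m -> R) (i : instr n m) nu : derive_instr P i -> P i.2 <= P nu.
Proof. by move/(_ nu)=> /orP [/ltW|/andP [/eqP -> _]]. Qed.

Lemma exists_derived_run (q : seq 'I_n) : (0 < m)%N -> uniq q ->
  exists (I : seq (instr n m)) P st, map fst I = q /\ run L C (@derive_instr R n m) I P st.
Proof.
move=> m_gt0; elim/last_ind: q => [|q a IH].
  by exists [::], (fun _ => 0), (fun _ => 0); split=> //; constructor.
rewrite rcons_uniq => /andP [a_new /IH [I [P [st [eI rI]]]]]; subst q.
have [mu der] := exists_derive_machine P a m_gt0.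
have [t t_start] := exists_start (map fst I) P st a mu.
exists (rcons I (a, mu)), (fun nu => if nu == mu then t + L a else P nu),
  (fun b => if b == a then t else st b).
by split; [rewrite map_rcons | exact: run_rcons rI a_new der t_start].
Qed.

Section Optimal.
Variables (I' : seq (instr n m)) (P' : 'I_m -> R) (st' : 'I_n -> R).
Hypothesis run' : run L C (@any_instr R n m) I' P' st'.
Variable machine' : 'I_n -> 'I_m.
Hypothesis machine'_in : forall b, (b, machine' b) \in I'.

Lemma running_card x (A : {set 'I_n}) : {in A, forall b, running st' b x} -> (#|A| <= m)%N.
Proof.
move=> A_run; rewrite -[m]card_ord -(card_in_imset (f := machine')) ?max_card //.
move=> b c bA cA same; apply/eqP/negPn/negP => bc.
have := run_disjoint run' (machine'_in b) (machine'_in c) bc.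
by rewrite same eqxx orbT => /(_ isT); apply/negP/running_not_disjoint; apply: A_run.
Qed.

Section Step.
Variable ok : ('I_m -> R) -> instr n m -> Prop.
Variables (I : seq (instr n m)) (P : 'I_m -> R) (st : 'I_n -> R) (a : 'I_n).
Hypothesis rI : run L C ok I P st.
Hypothesis a_new : a \notin map fst I.
Hypothesis earlier : {in map fst I, forall b, st b <= st' b /\ st' b <= st' a}.

(* Otherwise every machine is still busy at time st' a with a job placed
   before a; these m jobs and a all run at time st' a in the schedule I'. *)
Lemma exists_load_le_start : exists nu, P nu <= st' a.
Proof.
suff: ~~ [forall nu, st' a < P nu].
  by rewrite negb_forall => /existsP [nu]; rewrite -leNgt; exists nu.
apply/negP => /forallP busy_lt.
have st'a_ge0 : 0 <= st' a := (run_within run' (machine'_in a)).1.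
have last_job nu : exists2 b, (b, nu) \in I & P nu = st b + L b.
  case: (run_load rI nu) => // P0; move: (busy_lt nu).
  by rewrite P0 ltNge st'a_ge0.
have [f fI Pf] := fin_all_exists2 last_job.
have f_inj : injective f.
  by move=> i j fij; apply: (uniq_fst_eq (run_fst_uniq rI) (fI i)); rewrite fij.
have : (#|a |: [set f nu | nu : 'I_m]| <= m)%N.
  apply: (running_card (x := st' a)) => b /setU1P [->|/imsetP [nu _ ->]].
    by rewrite /running lexx ltrDl L_gt0.
  have [st_le st'_le] := earlier (map_f fst (fI nu)).
  by rewrite /running st'_le (lt_le_trans (busy_lt nu)) // Pf lerD2r.
rewrite cardsU1.
have -> : a \notin [set f nu | nu : 'I_m].
  by apply/imsetP => -[nu _ afnu]; move: a_new; rewrite afnu (map_f fst (fI nu)).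
by rewrite card_imset // card_ord ltnn.
Qed.

Lemma start_fits : fits (map fst I) st a (st' a).
Proof.
apply/allP=> b bp; apply/implyP=> Cab.
have [st_le st'_le] := earlier bp.
have ba : b != a by apply: contraNneq a_new => <-.
have := run_disjoint run' (machine'_in b) (machine'_in a) ba.
rewrite C_sym Cab => /(_ isT) /orP [b_before|a_before].
  by rewrite (le_trans _ b_before) ?orbT // lerD2r.
have := le_trans a_before st'_le; rewrite gerDl leNgt L_gt0 //.
Qed.

End Step.

Lemma derived_start_le I P st : run L C (@derive_instr R n m) I P st ->
  pairwise (fun b c => st' b <= st' c) (map fst I) ->
  {in map fst I, forall b, st b <= st' b}.
Proof.
elim=> // I0 P0 st0 a mu t rI IH a_new der [_ _ t_min].
rewrite map_rcons pairwise_rcons => /andP [/allP before /IH {}IH] b.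
have earlier : {in map fst I0, forall b, st0 b <= st' b /\ st' b <= st' a}.
  by move=> c cI; split; [exact: IH | exact: before].
have [nu Pnu] := exists_load_le_start rI a_new earlier.
have t_le : t <= st' a.
  apply: t_min; last exact/feasibleP/start_fits.
  exact: le_trans (derive_instr_le nu der) Pnu.
rewrite mem_rcons inE => /predU1P [->|bI]; first by rewrite eqxx.
have ba : b != a by apply: contraNneq a_new => <-.
by rewrite (negPf ba) IH.
Qed.

Lemma derived_makespan_le I P st : run L C (@derive_instr R n m) I P st ->
  pairwise (fun b c => st' b <= st' c) (map fst I) -> makespan P <= makespan P'.
Proof.
move=> rI sorted_I; have start_le := derived_start_le rI sorted_I.
apply: bigmax_le => [|nu _]; first exact: bigmax_ge_id.
case: (run_load rI nu) => [->|[b bI ->]]; first exact: bigmax_ge_id.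
apply: le_trans (le_bigmax _ _ (machine' b)).
apply: le_trans (run_within run' (machine'_in b)).2.
by rewrite lerD2r start_le // (map_f fst bI).
Qed.

End Optimal.

End Insertion.

Theorem theorem6 (R : realFieldType) (n m : nat)
    (L : 'I_n -> R) (C : 'I_n -> 'I_n -> bool) :
  (0 < m)%N ->
  (forall a, 0 < L a) ->
  (forall a b, C a b = C b a) ->
  (forall a, C a a = false) ->
  exists p : seq 'I_n,
    perm_eq p (enum 'I_n) /\
    exists (I : seq (instr n m)) (P : 'I_m -> R) (st : 'I_n -> R),
      derived_schedule L C p I P st /\
      forall (I' : seq (instr n m)) (P' : 'I_m -> R) (st' : 'I_n -> R),
        is_schedule L C I' P' st' -> makespan P <= makespan P'.
Proof.
move=> m_gt0 L_gt0 C_sym _.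
have perms_ne : permutations (enum 'I_n) != [::].
  by apply/eqP => perms_nil; move: (perm_refl (enum 'I_n)); rewrite -mem_permutations perms_nil.
have derivable p : p \in permutations (enum 'I_n) ->
    exists x : seq (instr n m) * ('I_m -> R) * ('I_n -> R),
      derived_schedule L C p x.1.1 x.1.2 x.2.
  rewrite mem_permutations => /perm_uniq; rewrite enum_uniq => uniq_p.
  have [I [P [st dI]]] := exists_derived_run C L_gt0 m_gt0 uniq_p.
  by exists (I, P, st).
have [p [[[I P] st] [p_perm dI p_min]]] :=
  exists_min_witness (fun x => makespan x.1.2) perms_ne derivable.
exists p; split; first by rewrite -mem_permutations.
exists I, P, st; split=> // I' P' st' [perm' run'].
have [machine' machine'_in] := perm_fst_enum_graph perm'.
pose q := sort (fun a b => st' a <= st' b) (enum 'I_n).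
have q_perm : q \in permutations (enum 'I_n) by rewrite mem_permutations perm_sort.
have [[[Iq Pq] stq] [eIq rIq] le_q] := p_min q q_perm.
apply: le_trans le_q (derived_makespan_le L_gt0 C_sym run' machine'_in rIq _).
rewrite /= eIq -sorted_pairwise; last by move=> ? ? ?; apply: le_trans.
by apply: sort_sorted => ? ?; apply: le_total.
Qed.
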